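(* Let $Z$ be the transport operator. Then: (1) $\ker Z=\ker|Z|=\bigoplus_{k=1}^{N-1}\mathrm{span}\{\varphi_{a_k}:a=n_{k+1},\dots,n_k-1\}$; (2) the restriction of $Z$ to $\operatorname{ran}|Z|$ and the restriction of $Z^*$ to $ZZ^*\mathcal H$ are isometric isomorphisms between $\operatorname{ran}|Z|$ and $ZZ^*\mathcal H$; (3) for $k=1,\dots,N-1$ and $a=0,\dots,n_{k+1}-1$, $Z\varphi_{a_k}=|a_{k+1}\rangle$ and $Z^*|a_{k+1}\rangle=\varphi_{a_k}$.
   Context: Fix $N\ge2$ and integers $n_1\ge n_2\ge\dots\ge n_N\ge1$. Let $\mathcal H=\bigoplus_{k=1}^N E_k$ where $E_k$ has orthonormal basis $\{|a_k\rangle:0\le a\le n_k-1\}$, and let $P_k$ be the orthogonal projection onto $E_k$. For vectors $x,y$, $|x\rangle\langle y|$ is the operator $u\mapsto\langle y,u\rangle x$. $\zeta_k=e^{2\pi i/n_k}$, $\varphi_{a_k}=n_k^{-1/2}\sum_{b=0}^{n_k-1}\zeta_k^{-ba}|b_k\rangle$. For $1\le k\le N-1$, $Z_k=n_k^{-1/2}\sum_{b=0}^{n_{k+1}-1}\sum_{a=0}^{n_k-1}\zeta_k^{ba}|b_{k+1}\rangle\langle a_k|$. The transport operator $Z=\bigoplus_{k=1}^{N-1}Z_k$ is the operator from $\bigoplus_{k=1}^{N-1}E_k$ into $\mathcal H$ which equals $Z_k$ on $E_k$; $Z^*$ is its adjoint (mapping $\bigoplus_{k=2}^NE_k$ into $\bigoplus_{k=1}^{N-1}E_k$)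 and $|Z|=Z^*Z$. *)

From HB Require Import structures.
From mathcomp Require Import all_boot all_order all_algebra.
From mathcomp Require Import complex.
From mathcomp Require Import reals trigo.
Import GRing.Theory Num.Theory.


Unset Printing Implicit Defensive.
Local Open Scope ring_scope.
Local Open Scope complex_scope.

Section Transport.
Variable R : realType.
(* Blocks are indexed 0-based: block k (0 <= k < N) is the paper's E_{k+1},
   of dimension n k (the paper's n_{k+1}). *)
Variable N : nat.
Variable n : nat -> nat.

(* index set of the orthonormal basis { |a_k> } of H = (+)_k E_k *)
Definition idx := {k : 'I_N & 'I_(n k)}.
Definition hvec := {ffun idx -> R[i]}.

Definition hdot (x y : hvec) : R[i] := \sum_(i : idx) (x i)^* * y i.
Definition hnorm (x : hvec) : R[i] := sqrtC (hdot x x).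

(* |a_k> (k, a : nat; it is the zero vector if k >= N or a >= n k) *)
Definition ket (k a : nat) : hvec :=
  [ffun i : idx => if (tag i == k :> nat) && (tagged i == a :> nat) then 1 else 0].

Definition ketbra (x y : hvec) (u : hvec) : hvec := hdot y u *: x.

Definition zeta (m : nat) : R[i] :=
  cos (2 * pi / m%:R) +i* sin (2 * pi / m%:R).
Definition isqrt (m : nat) : R[i] := ((Num.sqrt (m%:R : R))^-1)%:C.

Definition phi (k a : nat) : hvec :=
  \sum_(b < n k) (isqrt (n k) * (zeta (n k) ^+ (b * a))^-1) *: ket k b.

Definition Zk (k : nat) (u : hvec) : hvec :=
  isqrt (n k) *: \sum_(b < n k.+1) \sum_(a < n k)
     (zeta (n k) ^+ (b * a)) *: ketbra (ket k.+1 b) (ket k a) u.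

(* transport operator Z = (+)_{k=1}^{N-1} Z_k, defined on (+)_{k<N-1} E_k
   (it is extended by 0 on the last block; all statements restrict to the
   domain explicitly). *)
Definition transport (u : hvec) : hvec := \sum_(k < N.-1) Zk k u.

Definition evec (i : idx) : hvec := [ffun j => if j == i then 1 else 0].

(* adjoint of an operator T on H:  T^* y = sum_i <T e_i, y> e_i,
   i.e. the unique operator with <T x, y> = <x, T^* y> when T is linear *)
Definition adj (T : hvec -> hvec) (y : hvec) : hvec :=
  \sum_(i : idx) hdot (T (evec i)) y *: evec i.

Definition isometric_iso (P Q : hvec -> Prop) (T : hvec -> hvec) : Prop :=
  [/\ (forall (c : R[i]) x y, P x -> P y -> T (c *: x + y) = c *: T x + T y),
      (forall x, P x -> Q (T x)),
      (forall x y, P x -> P y -> T x = T y -> x = y),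
      (forall y, Q y -> exists2 x, P x & T x = y)
    & (forall x, P x -> hnorm (T x) = hnorm x)].

End Transport.

From HB Require Import structures.
From mathcomp Require Import all_boot all_order all_algebra.
From mathcomp Require Import complex.
From mathcomp Require Import reals trigo.
From mathcomp Require Import lra.
Set Implicit Arguments.
Unset Strict Implicit.
Unset Printing Implicit Defensive.

Import Order.TTheory GRing.Theory Num.Theory.
Local Open Scope ring_scope.

(* In block k the vectors phi_{a_k} are the columns of the unitary DFT matrix of
   size n_k, and Z sends phi_{a_k} to |a_{k+1}> (which is 0 when a >= n_{k+1})
   while Z^* sends |a_{k+1}> back to phi_{a_k}.  Hence Z Z^* is the identity on
   the blocks 2..N, which contain the range of Z, so Z Z^* Z = Z: Z is a partial
   isometry, and any partial isometry T with adjoint S restricts to mutually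
   inverse isometries between ran S and ran T.  The kernel is read off the
   expansion of x in the phi basis, whose coefficients <phi_{a_k}, x> equal
   <a_{k+1}, Z x> for a < n_{k+1}. *)

Lemma prim_root_orthogonal (F : fieldType) m (z : F) b c :
  m.-primitive_root z -> (b < m)%N -> (c < m)%N ->
  \sum_(a < m) z ^+ (b * a) / z ^+ (c * a) = (b == c)%:R * m%:R.
Proof.
move=> zP bm cm; have zc0 : z ^+ c != 0.
  by rewrite expf_neq0 // (prim_root_eq0 zP) -lt0n (prim_order_gt0 zP).
set u := z ^+ b / z ^+ c.
have uE a : z ^+ (b * a) / z ^+ (c * a) = u ^+ a by rewrite exprMn exprVn !exprM.
under eq_bigr do rewrite uE.
have [bc|bc] := eqVneq b c.
  rewrite /u bc divff // mul1r (eq_bigr (fun=> 1)) => [|a _]; last exact: expr1n.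
  by rewrite sumr_const card_ord.
have u1 : u != 1.
  rewrite /u -[_ == 1](inj_eq (mulIf zc0)) divfK // mul1r.
  by rewrite (eq_prim_root_expr zP) !modn_small.
have um : u ^+ m = 1.
  rewrite /u exprMn exprVn -!exprM !(mulnC _ m) !exprM (prim_expr_order zP).
  by rewrite !expr1n invr1 mulr1.
move: (prim_order_gt0 zP) um; case: m {bm cm uE zP} => // m _ /eqP.
by rewrite expfS_eq1 (negbTE u1) /= => /eqP ->; rewrite mul0r.
Qed.

Section RootOfUnity.
Context {R : realType}.

Lemma cos_neq1 (x : R) : 0 < x < pi *+ 2 -> cos x != 1.
Proof.
move=> /andP[x0 x2pi]; set y := x / 2.
have xE : x = y *+ 2 by rewrite /y -mulr_natr divfK ?pnatr_eq0.
have : 0 < sin y.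
  apply: sin_gt0_pi; rewrite divr_gt0 //= ltr_pdivrMr //.
  by rewrite -mulr_natr in x2pi.
apply: contraTN => /eqP; rewrite xE cos_mulr2n => cy.
have /eqP : sin y ^+ 2 = 0 by have := cos2Dsin2 y; lra.
by rewrite expf_eq0 /= => /eqP ->; rewrite ltxx.
Qed.

Lemma zeta_expE m j : zeta R m ^+ j =
  (cos (j%:R * (2 * pi / m%:R)) +i* sin (j%:R * (2 * pi / m%:R)))%C.
Proof.
elim: j => [|j IH]; first by rewrite expr0 mul0r cos0 sin0.
set t := 2 * pi / m%:R.
have -> : j.+1%:R * t = t + j%:R * t by rewrite -addn1 natrD mulrDl mul1r addrC.
by rewrite exprS IH /zeta cosD sinD; congr (_ +i* _)%C; rewrite /= addrC.
Qed.

Lemma zeta_prim_root m : (0 < m)%N -> m.-primitive_root (zeta R m).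
Proof.
move=> m0; apply/andP; split=> //; apply/forallP => i.
rewrite unity_rootE zeta_expE eq_complex /=.
have [iE|im] := eqVneq i.+1 m.
  by rewrite iE mulrCA divff ?pnatr_eq0 -?lt0n // mulr1 mulr_natl cos2pi sin2pi !eqxx.
rewrite eqbF_neg negb_and cos_neq1 //.
rewrite mulr_gt0 ?divr_gt0 ?mulr_gt0 ?ltr0n ?pi_gt0 //=.
rewrite mulrCA -[pi *+ 2]mulr_natl gtr_pMr ?mulr_gt0 ?pi_gt0 // ltr_pdivrMr ?ltr0n // mul1r.
by rewrite ltr_nat ltn_neqAle im ltn_ord.
Qed.

Lemma zeta_conj m : (zeta R m)^* = (zeta R m)^-1.
Proof.
apply/esym/mulr1_eq/eqP; rewrite eq_complex /=; set t := 2 * pi / m%:R.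
by rewrite mulrN opprK -!expr2 cos2Dsin2 mulrN [sin t * _]mulrC addNr !eqxx.
Qed.

Lemma zetaX_conj m j : (zeta R m ^+ j)^* = (zeta R m ^+ j)^-1.
Proof. by rewrite -exprVn -zeta_conj rmorphXn. Qed.

Lemma isqrt_conj m : (isqrt R m)^* = isqrt R m.
Proof. by rewrite geC0_conj // ler0c invr_ge0 sqrtr_ge0. Qed.

Lemma isqrt_sqr m : (0 < m)%N -> isqrt R m * isqrt R m = (m%:R)^-1.
Proof.
move=> m0; rewrite /isqrt -rmorphM /= -invfM -expr2 sqr_sqrtr ?ler0n //.
by rewrite -(rmorph_nat (real_complex R)) fmorphV.
Qed.

(* phi k a = \sum_b dft (n k) a b *: ket k b *)
Definition dft (m a b : nat) : R[i] := isqrt R m * (zeta R m ^+ (b * a))^-1.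

Lemma dftC m a b : dft m a b = dft m b a.
Proof. by rewrite /dft mulnC. Qed.

Lemma dft_conj m a b : (dft m a b)^* = isqrt R m * zeta R m ^+ (b * a).
Proof. by rewrite /dft -zetaX_conj -[in LHS]isqrt_conj -rmorphM conjCK. Qed.

Lemma dft_unitary {m b c : nat} : (b < m)%N -> (c < m)%N ->
  \sum_(a < m) (dft m a b)^* * dft m a c = (b == c)%:R.
Proof.
move=> bm cm; have m0 : (0 < m)%N by apply: leq_ltn_trans bm.
transitivity (isqrt R m * isqrt R m *
    \sum_(a < m) zeta R m ^+ (b * a) / zeta R m ^+ (c * a)).
  by rewrite mulr_sumr; apply: eq_bigr => a _; rewrite dft_conj mulrACA.
rewrite prim_root_orthogonal ?zeta_prim_root // isqrt_sqr // mulrCA.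
by rewrite mulVf ?pnatr_eq0 -?lt0n // mulr1.
Qed.

End RootOfUnity.

Lemma sum_ord_shift {V : nmodType} (G : nat -> V) {m : nat} :
  G 0 = 0 -> \sum_(k < m) G k = \sum_(k < m.-1) G k.+1.
Proof. by case: m => [|m] G0; rewrite ?big_ord0 // big_ord_recl G0 add0r. Qed.

Lemma sum_ord_delta {V : nmodType} (F : nat -> V) {m a : nat} : (a < m)%N ->
  \sum_(i < m) F i *+ (i == a :> nat) = F a.
Proof.
move=> am; rewrite (bigD1 (Ordinal am)) //= eqxx big1 ?addr0 // => i.
by rewrite -val_eqE /= => /negbTE ->.
Qed.

Section HilbertSpace.
Variables (R : realType) (N : nat) (n : nat -> nat).
Local Notation hvec := (hvec R N n).
Local Notation idx := (idx N n).
Local Notation hdot := (hdot R N n).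
Local Notation ket := (ket R N n).
Local Notation phi := (phi R N n).
Local Notation adj := (adj R N n).

Lemma hdot_is_scalar u : scalar (hdot u).
Proof.
move=> c v w; rewrite /hdot mulr_sumr -big_split; apply: eq_bigr => i _.
by rewrite !ffunE mulrDr mulrCA.
Qed.

HB.instance Definition _ u :=
  GRing.isLinear.Build R[i] hvec R[i] *%R (hdot u) (hdot_is_scalar u).

Lemma hdotC u v : hdot u v = (hdot v u)^*.
Proof.
rewrite /hdot rmorph_sum; apply: eq_bigr => i _.
by rewrite mulrC -{1}[v i]conjCK -rmorphM.
Qed.

Lemma hdotZl c u v : hdot (c *: u) v = c^* * hdot u v.
Proof.
by rewrite /hdot mulr_sumr; apply: eq_bigr => i _; rewrite ffunE rmorphM mulrA.
Qed.

Lemma hdotDl u v w : hdot (u + v) w = hdot u w + hdot v w.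
Proof.
by rewrite /hdot -big_split; apply: eq_bigr => i _; rewrite ffunE rmorphD mulrDl.
Qed.

Lemma hdot0l v : hdot 0 v = 0.
Proof. by rewrite /hdot big1 // => i _; rewrite ffunE conjC0 mul0r. Qed.

Lemma hdot_suml (I : Type) (r : seq I) (P : pred I) (F : I -> hvec) v :
  hdot (\sum_(i <- r | P i) F i) v = \sum_(i <- r | P i) hdot (F i) v.
Proof. by elim/big_rec2: _ => [|i x y _ <-]; rewrite ?hdot0l ?hdotDl. Qed.

Lemma sum_idx {V : nmodType} (F : nat -> nat -> V) :
  \sum_(i : idx) F (tag i) (tagged i) = \sum_(k < N) \sum_(a < n k) F k a.
Proof.
pose G (k : 'I_N) (a : 'I_(n k)) := F k a.
by rewrite (sig_big_dep predT (fun _ _ => true) G).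
Qed.

Lemma idx_eqE (i j : idx) :
  (i == j) = (tag i == tag j :> nat) && (tagged i == tagged j :> nat).
Proof.
apply/eqP/andP => [-> //|[/eqP/val_inj]].
case: i j => [k a] [l b] /= kl; case: l / kl b => b /eqP/val_inj -> //.
Qed.

Lemma evec_ket i : evec R N n i = ket (tag i) (tagged i).
Proof. by apply/ffunP => j; rewrite !ffunE idx_eqE. Qed.

Lemma ket_off k a (i : idx) : tag i != k :> nat -> ket k a i = 0.
Proof. by rewrite ffunE => /negbTE ->. Qed.

Lemma ket_eq0 k a : ~~ ((k < N) && (a < n k))%N -> ket k a = 0.
Proof.
move=> ka; apply/ffunP => i; rewrite !ffunE.
by case: andP => // -[/eqP ik /eqP ia]; move: ka; rewrite -ik -ia !ltn_ord.
Qed.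

Lemma hdot_ket_idx (i : idx) x : hdot (ket (tag i) (tagged i)) x = x i.
Proof.
rewrite -evec_ket /hdot (bigD1 i) //= big1 => [|j ji].
  by rewrite !ffunE eqxx conjC1 mul1r addr0.
by rewrite !ffunE (negbTE ji) conjC0 mul0r.
Qed.

Lemma hvec_expand x : x = \sum_(k < N) \sum_(a < n k) hdot (ket k a) x *: ket k a.
Proof.
rewrite -(sum_idx (fun k a => hdot (ket k a) x *: ket k a)).
apply/ffunP => j; rewrite sum_ffunE (bigD1 j) //= big1 => [|i].
  by rewrite hdot_ket_idx -evec_ket !ffunE eqxx addr0; apply/esym/mulr1.
by rewrite -evec_ket !ffunE eq_sym => /negbTE ->; rewrite scaler0.
Qed.

Lemma hdot_ket_eq0 k a (y : hvec) :
  (forall i : idx, tag i = k :> nat -> y i = 0) -> hdot (ket k a) y = 0.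
Proof.
move=> y0; rewrite /hdot big1 // => i _; rewrite ffunE.
by case: ifP => [/andP[/eqP/y0 -> _]|_]; rewrite ?mulr0 ?conjC0 ?mul0r.
Qed.

Lemma hvec_ext x y : (forall u, hdot u x = hdot u y) -> x = y.
Proof.
move=> xy; rewrite [x]hvec_expand [y]hvec_expand.
by apply: eq_bigr => k _; apply: eq_bigr => a _; rewrite xy.
Qed.

Lemma hdot_ket_ket j b k a : (k < N)%N -> (a < n k)%N ->
  hdot (ket j b) (ket k a) = ((j == k) && (b == a))%:R.
Proof.
move=> kN an; pose i := @Tagged _ (Ordinal kN) (fun k : 'I_N => 'I_(n k)) (Ordinal an).
rewrite hdotC (hdot_ket_idx i).
by rewrite ffunE /= [k == j]eq_sym [a == b]eq_sym; case: andP; rewrite ?conjC1 ?conjC0.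
Qed.

Lemma adjE T y :
  adj T y = \sum_(k < N) \sum_(a < n k) hdot (T (ket k a)) y *: ket k a.
Proof.
rewrite -(sum_idx (fun k a => hdot (T (ket k a)) y *: ket k a)).
by apply: eq_bigr => i _; rewrite evec_ket.
Qed.

Lemma hdot_adj (T : {linear hvec -> hvec}) x y : hdot x (adj T y) = hdot (T x) y.
Proof.
rewrite adjE {2}[x]hvec_expand !linear_sum hdot_suml; apply: eq_bigr => k _.
rewrite !linear_sum hdot_suml; apply: eq_bigr => a _.
by rewrite !linearZ hdotZl /= -hdotC mulrC.
Qed.

Lemma adj_is_linear T : linear (adj T).
Proof.
move=> c y z; rewrite /adj scaler_sumr -big_split; apply: eq_bigr => i _.
by rewrite linearP scalerDl scalerA.
Qed.

HB.instance Definition _ T :=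
  GRing.isLinear.Build R[i] hvec hvec *:%R (adj T) (adj_is_linear T).

Lemma phi_block_expand k x :
  \sum_(a < n k) hdot (phi k a) x *: phi k a =
  \sum_(c < n k) hdot (ket k c) x *: ket k c.
Proof.
have phiE a : phi k a = \sum_(c < n k) dft (n k) a c *: ket k c by [].
have hdot_phi a :
    hdot (phi k a) x = \sum_(b < n k) (dft (n k) a b)^* * hdot (ket k b) x.
  by rewrite hdot_suml; apply: eq_bigr => b _; rewrite hdotZl.
under eq_bigr => a _ do rewrite hdot_phi phiE scaler_sumr.
rewrite exchange_big; apply: eq_bigr => c _.
under eq_bigr do rewrite scalerA; rewrite -scaler_suml; congr (_ *: _).
transitivity (\sum_(b < n k) hdot (ket k b) x *
    \sum_(a < n k) (dft (n k) a b)^* * dft (n k) a c).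
  under eq_bigr do rewrite mulr_suml; rewrite exchange_big.
  apply: eq_bigr => b _; rewrite mulr_sumr; apply: eq_bigr => a _.
  by rewrite mulrAC mulrC.
under eq_bigr => b _ do rewrite dft_unitary // mulr_natr.
exact: (sum_ord_delta (fun b => hdot (ket k b) x) (ltn_ord c)).
Qed.

Section PartialIsometry.
Variables T S : {linear hvec -> hvec}.
Hypothesis adjTS : forall x y, hdot (T x) y = hdot x (S y).
Hypothesis TST : forall x, T (S (T x)) = T x.

Lemma adjST x y : hdot (S x) y = hdot x (T y).
Proof. by rewrite hdotC -adjTS -hdotC. Qed.

Lemma STS y : S (T (S y)) = S y.
Proof.
apply: hvec_ext => u.
by rewrite -adjTS -adjST -adjTS TST adjTS.
Qed.

Lemma ker_adjT x : S (T x) = 0 <-> T x = 0.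
Proof. by split=> [STx0|->]; rewrite ?linear0 // -TST STx0 linear0. Qed.

Lemma partial_isometry_iso (P Q : hvec -> Prop) :
  (forall x, P x <-> exists y, x = S y) -> (forall y, Q y <-> exists x, y = T x) ->
  isometric_iso R N n P Q T.
Proof.
move=> PE QE; split.
- by move=> c x y _ _; rewrite linearP.
- by move=> x /PE[y ->]; apply/QE; exists (S y).
- by move=> _ _ /PE[y1 ->] /PE[y2 ->] e; rewrite -STS e STS.
- by move=> _ /QE[x ->]; exists (S (T x)); [apply/PE; exists (T x) | rewrite TST].
- by move=> _ /PE[y ->]; rewrite /hnorm adjTS STS.
Qed.

End PartialIsometry.

End HilbertSpace.

Section Transport.
Variables (R : realType) (N : nat) (n : nat -> nat).
Hypothesis n_mono : forall k, (k.+1 < N)%N -> (n k.+1 <= n k)%N.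
Local Notation hvec := (hvec R N n).
Local Notation idx := (idx N n).
Local Notation hdot := (hdot R N n).
Local Notation ket := (ket R N n).
Local Notation phi := (phi R N n).
Local Notation Z := (transport R N n).
Local Notation Zs := (adj R N n (transport R N n)).

Lemma Zk_is_linear k : linear (Zk R N n k).
Proof.
move=> c u v; rewrite /Zk scalerA [c * _]mulrC -scalerA -scalerDr; congr (_ *: _).
rewrite scaler_sumr -big_split; apply: eq_bigr => b _.
rewrite scaler_sumr -big_split; apply: eq_bigr => a _.
by rewrite /ketbra linearP scalerDl scalerDr !scalerA mulrCA.
Qed.

HB.instance Definition _ k :=
  GRing.isLinear.Build R[i] hvec hvec *:%R (Zk R N n k) (Zk_is_linear k).

Lemma transport_is_linear : linear Z.
Proof.
move=> c u v; rewrite /transport scaler_sumr -big_split.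
by apply: eq_bigr => k _; rewrite linearP.
Qed.

HB.instance Definition _ :=
  GRing.isLinear.Build R[i] hvec hvec *:%R Z transport_is_linear.

Lemma Zk_ket j k a : (k < N)%N -> (a < n k)%N ->
  Zk R N n j (ket k a) =
  (j == k)%:R *: \sum_(b < n k.+1) (dft (n k) b a)^* *: ket k.+1 b.
Proof.
move=> kN an; rewrite /Zk /ketbra.
have [->|jk] := eqVneq j k; last first.
  rewrite scale0r big1 ?scaler0 // => b _; rewrite big1 // => c _.
  by rewrite hdot_ket_ket // (negbTE jk) scale0r scaler0.
rewrite scale1r scaler_sumr; apply: eq_bigr => b _.
under eq_bigr => c _ do rewrite hdot_ket_ket // eqxx /= scaler_nat -scalerMnr.
rewrite (sum_ord_delta (fun c => zeta R (n k) ^+ (b * c) *: ket k.+1 b) an).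
by rewrite scalerA dft_conj mulnC.
Qed.

Lemma transport_ket k a : (k < N.-1)%N -> (a < n k)%N ->
  Z (ket k a) = \sum_(b < n k.+1) (dft (n k) b a)^* *: ket k.+1 b.
Proof.
move=> kN an; have kN' : (k < N)%N := leq_trans kN (leq_pred N).
rewrite /transport; under eq_bigr => j _ do rewrite Zk_ket // scaler_nat.
exact: (sum_ord_delta (fun=> \sum_(b < n k.+1) (dft (n k) b a)^* *: ket k.+1 b) kN).
Qed.

Lemma transport_ket_out k a : (N.-1 <= k)%N -> Z (ket k a) = 0.
Proof.
move=> Nk; have [/andP[kN an]|ka] := boolP ((k < N) && (a < n k))%N; last first.
  by rewrite ket_eq0 // linear0.
rewrite /transport big1 // => j _.
by rewrite Zk_ket // ltn_eqF ?scale0r // (leq_trans (ltn_ord j) Nk).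
Qed.

Lemma transport_phi k a : (k < N.-1)%N -> (a < n k)%N -> Z (phi k a) = ket k.+1 a.
Proof.
move=> kN an; have k1N : (k.+1 < N)%N by rewrite -ltn_predRL.
rewrite linear_sum.
under eq_bigr => c _ do rewrite linearZ /= transport_ket // scaler_sumr.
rewrite exchange_big /=.
transitivity (\sum_(b < n k.+1) ket k.+1 b *+ (b == a :> nat)).
  apply: eq_bigr => b _; under eq_bigr do rewrite scalerA.
  rewrite -scaler_suml -scaler_nat; congr (_ *: _).
  rewrite -(dft_unitary (leq_trans (ltn_ord b) (n_mono k1N)) an).
  by apply: eq_bigr => c _; rewrite mulrC !(dftC _ c).
have [an1|] := ltnP a (n k.+1); first exact: sum_ord_delta.
move=> na; rewrite big1 => [|b _]; last first.
  by rewrite ltn_eqF // (leq_trans (ltn_ord b) na).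
by rewrite ket_eq0 // [(a < _)%N]ltnNge na andbF.
Qed.

Lemma adj_transport_ket k a : (k < N.-1)%N -> (a < n k.+1)%N ->
  Zs (ket k.+1 a) = phi k a.
Proof.
move=> kN an; have kN' : (k < N)%N := leq_trans kN (leq_pred N).
have k1N : (k.+1 < N)%N by rewrite -ltn_predRL.
rewrite adjE (bigD1 (Ordinal kN')) //= [X in _ + X]big1 ?addr0 => [|j].
  apply: eq_bigr => c _; congr (_ *: _).
  rewrite transport_ket // hdot_suml.
  under eq_bigr => b _ do rewrite hdotZl conjCK hdot_ket_ket // eqxx /= mulr_natr.
  exact: (sum_ord_delta (fun b => dft (n k) b c) an).
rewrite -val_eqE /= => jk; rewrite big1 // => c _.
have [jN|Nj] := ltnP j N.-1; last by rewrite transport_ket_out // hdot0l scale0r.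
rewrite transport_ket // hdot_suml big1 ?scale0r // => b _.
by rewrite hdotZl hdot_ket_ket // eqSS (negbTE jk) mulr0.
Qed.

Lemma hdot_phi_transport x k a : (k < N.-1)%N -> (a < n k.+1)%N ->
  hdot (phi k a) x = hdot (ket k.+1 a) (Z x).
Proof. by move=> kN an; rewrite -adj_transport_ket // hdotC hdot_adj -hdotC. Qed.

Lemma transport_vanishes_first x (i : idx) : tag i = 0 :> nat -> Z x i = 0.
Proof.
move=> i0; rewrite [x]hvec_expand !linear_sum sum_ffunE big1 // => k _.
rewrite linear_sum sum_ffunE big1 // => a _; rewrite linearZ /=.
have [kN|Nk] := ltnP k N.-1; last by rewrite transport_ket_out // scaler0 ffunE.
rewrite transport_ket // ffunE sum_ffunE big1 ?scaler0 // => b _.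
by rewrite ffunE ket_off ?scaler0 // i0.
Qed.

Lemma adj_vanishes_last y (i : idx) : (N.-1 <= tag i)%N -> Zs y i = 0.
Proof.
by move=> iN; rewrite -hdot_ket_idx hdot_adj /= transport_ket_out // hdot0l.
Qed.

Lemma transport_adj (y : hvec) :
  (forall i : idx, tag i = 0 :> nat -> y i = 0) -> Z (Zs y) = y.
Proof.
move=> y0.
have yE : y = \sum_(k < N.-1) \sum_(a < n k.+1) hdot (ket k.+1 a) y *: ket k.+1 a.
  pose G k := \sum_(a < n k) hdot (ket k a) y *: ket k a.
  rewrite {1}[y]hvec_expand (sum_ord_shift (G := G)) //.
  by rewrite /G big1 // => a _; rewrite hdot_ket_eq0 ?scale0r.
rewrite [in LHS]yE [Zs _]linear_sum linear_sum [in RHS]yE; apply: eq_bigr => k _.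
rewrite /= [Zs _]linear_sum linear_sum; apply: eq_bigr => a _; rewrite !linearZ /=.
have k1N : (k.+1 < N)%N by rewrite -ltn_predRL.
by rewrite adj_transport_ket // transport_phi // (leq_trans (ltn_ord a) (n_mono k1N)).
Qed.

Lemma transport_dom_expand (x : hvec) :
  (forall i : idx, (N.-1 <= tag i)%N -> x i = 0) ->
  x = \sum_(k < N.-1) \sum_(a < n k) hdot (phi k a) x *: phi k a.
Proof.
move=> x0; rewrite {1}[x]hvec_expand.
pose G k := \sum_(a < n k) hdot (phi k a) x *: phi k a.
rewrite (big_ord_widen N G) ?leq_pred // /G.
rewrite [in RHS]big_mkcond; apply: eq_bigr => k _.
case: ltnP => kN; first by rewrite phi_block_expand.
by rewrite big1 // => a _; rewrite hdot_ket_eq0 ?scale0r // => i ik; apply: x0; rewrite ik.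
Qed.

Lemma transport_kerE (x : hvec) :
  (forall i : idx, (N.-1 <= tag i)%N -> x i = 0) /\ Z x = 0 <->
  exists c : nat -> nat -> R[i],
    x = \sum_(k < N.-1) \sum_(n k.+1 <= a < n k) c k a *: phi k a.
Proof.
split=> [[x0 Zx0]|[c ->]].
  exists (fun k a => hdot (phi k a) x); rewrite {1}(transport_dom_expand x0).
  apply: eq_bigr => k _; have k1N : (k.+1 < N)%N by rewrite -ltn_predRL.
  rewrite -(big_mkord xpredT (fun a => hdot (phi k a) x *: phi k a)).
  rewrite (big_cat_nat (leq0n _) (n_mono k1N)) /=.
  rewrite big_nat_cond big1 ?add0r // => a /andP[/andP[_ an] _].
  by rewrite hdot_phi_transport // Zx0 linear0 scale0r.
split.
  move=> i iN; rewrite sum_ffunE big1 // => k _; rewrite sum_ffunE big1 // => a _.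
  rewrite ffunE sum_ffunE big1 ?scaler0 // => b _.
  by rewrite ffunE ket_off ?scaler0 // neq_ltn (leq_trans (ltn_ord k) iN) orbT.
rewrite linear_sum big1 // => k _.
rewrite linear_sum big_nat_cond big1 // => a /andP[/andP[na ak] _].
by rewrite linearZ /= transport_phi // ket_eq0 ?scaler0 // [(a < _)%N]ltnNge na andbF.
Qed.

End Transport.

Theorem proposition2p9 (R : realType) (N : nat) (n : nat -> nat)
  (hN : (2 <= N)%N)
  (hmono : forall k : nat, (k.+1 < N)%N -> (n k.+1 <= n k)%N)
  (hpos : forall k : nat, (k < N)%N -> (0 < n k)%N) :
  let Z := transport R N n in
  let Zs := adj R N n (transport R N n) in
  let absZ := fun x => Zs (Z x) in
  (* domain of Z : (+)_{k=1}^{N-1} E_k (0-based blocks 0 .. N-2) *)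
  let domZ := fun x : hvec R N n => forall i : idx N n, (N.-1 <= tag i)%N -> x i = 0 in
  (* domain of Z^* : (+)_{k=2}^{N} E_k (0-based blocks 1 .. N-1) *)
  let domZs := fun x : hvec R N n => forall i : idx N n, tag i = 0 :> nat -> x i = 0 in
  (* (+)_{k=1}^{N-1} span{ phi_{a_k} : a = n_{k+1}, ..., n_k - 1 } *)
  let K := fun x : hvec R N n => exists c : nat -> nat -> R[i],
        x = \sum_(k < N.-1) \sum_(n k.+1 <= a < n k) c k a *: phi R N n k a in
  let ranAbsZ := fun y => exists2 x, domZ x & y = absZ x in
  let ranZZs := fun y => exists2 x, domZs x & y = Z (Zs x) in
  [/\ (forall x, (domZ x /\ Z x = 0) <-> K x),
      (forall x, (domZ x /\ absZ x = 0) <-> K x),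
      isometric_iso R N n ranAbsZ ranZZs Z,
      isometric_iso R N n ranZZs ranAbsZ Zs
    & forall k a : nat, (k < N.-1)%N -> (a < n k.+1)%N ->
        Z (phi R N n k a) = ket R N n k.+1 a /\ Zs (ket R N n k.+1 a) = phi R N n k a].
Proof.
move=> Z Zs absZ domZ domZs K ranAbsZ ranZZs.
have adjZ x y : hdot R N n (Z x) y = hdot R N n x (Zs y) by rewrite hdot_adj.
have ZZsZ x : Z (Zs (Z x)) = Z x := transport_adj hmono (transport_vanishes_first x).
have ranAbsZE x : ranAbsZ x <-> exists y, x = Zs y.
  split=> [[u _ ->]|[y ->]]; first by exists (Z u).
  by exists (Zs y); [apply: adj_vanishes_last | exact/esym/(STS adjZ ZZsZ)].
have ranZZsE y : ranZZs y <-> exists x, y = Z x.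
  split=> [[u _ ->]|[x ->]]; first by exists (Zs u).
  by exists (Z x); [apply: transport_vanishes_first | rewrite ZZsZ].
split.
- exact: transport_kerE.
- move=> x; apply: iff_trans (transport_kerE hmono x).
  have kerE := ker_adjT ZZsZ x.
  by split=> -[x0 e]; split=> //; [apply/kerE | apply/kerE].
- exact (partial_isometry_iso adjZ ZZsZ ranAbsZE ranZZsE).
- exact (partial_isometry_iso (adjST adjZ) (STS adjZ ZZsZ) ranZZsE ranAbsZE).
- move=> k a kN an; have k1N : (k.+1 < N)%N by rewrite -ltn_predRL.
  split; first exact (transport_phi R hmono kN (leq_trans an (hmono _ k1N))).
  exact (adj_transport_ket R kN an).
Qed.
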